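(* Fix a run $r$ of a protocol $P$, a node $\theta=\langle i,t\rangle$, and a delay $\Delta>0$ (an integer). For each process $j$ let $t_j$ be the minimal time $l\ge 0$ such that $\langle j,l\rangle\not\rightsquigarrow_r\theta$. Then there exists a run $r'$ with $r'\approx r$ such that for every process $j$: $r_j(m)=r'_j(m)$ for all $m\le t_j$, and $r_j(m)=r'_j(m+\Delta)$ for all $m\ge t_j+1$.
   Context: Model: $n$ processes connected by directed FIFO channels; an environment (adversary) schedules everything. Time is identified with the natural numbers; a run $r=r(0),r(1),\dots$ is an infinite sequence of global states, $r_i(m)$ denotes process $i$'s local state at time $m$, and round $m+1$ transforms $r(m)$ into $r(m+1)$. In each round the environment chooses independently for each process $i$ one of: $\mathtt{move}_i$ ($i$ performs an action allowed by its protocol at its current local state — a local action or sending a message), $\mathtt{skip}_i$ (nothing happens to $i$), $\mathtt{invoke}_i(x)$ ($i$ receives external input $x$), or $\mathtt{deliver}_i$ of a message from some $j$ (delivered if it is the oldest message in transit on the channel from $j$ to $i$). The local state of a process consists of its initial value together with the complete ordered history of all actions it performed, messages it sent and received, and inputs it received. A run of protocol $P=(P_1,\dots,P_n)$ starts in an initial global state and every action performed by every process $i$ is among those allowed by $P_i$ at $i$'s current local state. A node is a process-time pair $\langle p,t\rangle$. Message chains: $\langle p,t\rangle\rightsquigarrow_r\langle q,t'\rangle$ holds if (1a) $p=q$ and $t<t'$, or (1b) $p$ sends a message to $q$ in round $t+1$ of $r$ that is delivered no later than round $t'$, or (2) there is a node $\theta''$ with $\langle p,t\rangle\rightsquigarrow_r\theta''$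 and $\theta''\rightsquigarrow_r\langle q,t'\rangle$. Two runs are locally equivalent, $r\approx r'$, if for every process $j$, a local state of $j$ appears in $r$ iff it appears in $r'$. *)

From mathcomp Require Import all_boot.
Set Implicit Arguments. Unset Strict Implicit. Unset Printing Implicit Defensive.

Section Model.
(* n processes 'I_n; V = initial values; X = external inputs;
   M = message contents; A = local (non-send) actions. *)
Variables (n : nat) (V X M A : Type).

Inductive event :=
  | EvLocal of A
  | EvSend of 'I_n & M
  | EvRecv of 'I_n & M
  | EvInput of X.

Record lstate := LState { linit : V; lhist : seq event }.

Inductive pact := PLocal of A | PSend of 'I_n & M.

Definition protocol := 'I_n -> lstate -> pact -> Prop.

Definition gstate := 'I_n -> lstate.
Definition run_t := nat -> gstate.   (* r m i = r_i(m) *)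

Definition ev_of_pact (a : pact) : event :=
  match a with PLocal x => EvLocal x | PSend j m => EvSend j m end.

Definition app_ev (s : lstate) (e : event) : lstate :=
  LState (linit s) (rcons (lhist s) e).

Definition sent_to (s : lstate) (q : 'I_n) : seq M :=
  pmap (fun e => match e with
                 | EvSend q' m => if q' == q then Some m else None
                 | _ => None end) (lhist s).

Definition recv_count (s : lstate) (p : 'I_n) : nat :=
  count (fun e => match e with EvRecv p' _ => p' == p | _ => false end) (lhist s).

(* m is the oldest message in transit on the FIFO channel j -> i in g *)
Definition oldest_in_transit (g : gstate) (j i : 'I_n) (m : M) : Prop :=
  exists rest, drop (recv_count (g i) j) (sent_to (g j) i) = m :: rest.

(* What can happen to process i in one round, starting from global state g.
   (deliver with no message in transit on the channel = nothing happens,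
   which is covered by st_skip.) *)
Inductive local_step (P : protocol) (g : gstate) (i : 'I_n) : lstate -> Prop :=
  | st_skip : local_step P g i (g i)
  | st_move (a : pact) : P i (g i) a -> local_step P g i (app_ev (g i) (ev_of_pact a))
  | st_invoke (x : X) : local_step P g i (app_ev (g i) (EvInput x))
  | st_deliver (j : 'I_n) (m : M) :
      oldest_in_transit g j i m -> local_step P g i (app_ev (g i) (EvRecv j m)).

Definition is_run (P : protocol) (r : run_t) : Prop :=
  (forall i, lhist (r 0 i) = [::]) /\
  (forall m i, local_step P (r m) i (r m.+1 i)).

Definition node := ('I_n * nat)%type.

(* In (ch_msg) the message sent by p to q
   in round t+1 is the (k+1)-th one on channel p->q, k = #sent by time t;
   by FIFO it is delivered by round t' iff q has received >= k+1 messages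
   from p at time t'. *)
Inductive chain (r : run_t) : node -> node -> Prop :=
  | ch_local (p : 'I_n) (t t' : nat) : t < t' -> chain r (p, t) (p, t')
  | ch_msg (p q : 'I_n) (t t' : nat) :
      size (sent_to (r t p) q) < size (sent_to (r t.+1 p) q) ->
      size (sent_to (r t.+1 p) q) <= recv_count (r t' q) p ->
      chain r (p, t) (q, t')
  | ch_trans (a b c : node) : chain r a b -> chain r b c -> chain r a c.

Definition loc_equiv (r r' : run_t) : Prop :=
  forall (j : 'I_n) (s : lstate), (exists m, r m j = s) <-> (exists m, r' m j = s).

End Model.

From mathcomp Require Import all_boot.
From mathcomp Require Import zify.
Set Implicit Arguments. Unset Strict Implicit.

(* Keep every process unchanged up to its threshold [tj j] and then let it idle
   for [Delta] rounds before replaying the rest of its history.  The only round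
   that could fail in the new run is a delivery whose message has not yet been
   sent there.  Before [tj j], j is in the causal past of <i,t>, and so is the
   sender's sending node, which therefore lies before the sender's threshold
   and is not delayed; after [tj j], the receiver is delayed by [Delta] and no
   sender is delayed by more. *)

Definition delay_time (T D m : nat) : nat :=
  if m <= T then m else maxn T (m - D).

Section DelayTime.
Variables T D : nat.

Lemma delay_time_le m : m <= T -> delay_time T D m = m.
Proof. by rewrite /delay_time => ->. Qed.

Lemma delay_time_addD m : T < m -> delay_time T D (m + D) = m.
Proof. by rewrite /delay_time => lt_Tm; rewrite ifN; lia. Qed.

Lemma delay_time_ge_sub m : m - D <= delay_time T D m.
Proof. by rewrite /delay_time; case: ifP; lia. Qed.

Lemma delay_time_ge_min m : minn m T <= delay_time T D m.
Proof. by rewrite /delay_time; case: ifP; lia. Qed.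

Lemma delay_time_surj x : exists m, delay_time T D m = x.
Proof.
case: (leqP x T) => [le_xT | lt_Tx]; first by exists x; exact: delay_time_le.
by exists (x + D); exact: delay_time_addD.
Qed.

Lemma delay_timeS m : 0 < D -> T <= m ->
  delay_time T D m.+1 = delay_time T D m \/
  delay_time T D m.+1 = (delay_time T D m).+1 /\ delay_time T D m = m - D.
Proof.
move=> D_gt0 le_Tm; rewrite /delay_time.
have -> : (m.+1 <= T) = false by lia.
by case: ifP; lia.
Qed.

End DelayTime.

Lemma exists_crossing (g : nat -> nat) c m :
  g 0 <= c -> c < g m -> exists2 s, s < m & g s <= c < g s.+1.
Proof.
move=> g0c; elim: m => [|m IHm] cgm; first lia.
case: (ltnP c (g m)) => [/IHm [s lt_sm gs] | gmc]; last by exists m => //; apply/andP.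
by exists s => //; lia.
Qed.

Section Runs.
Variables (n : nat) (V X M A : Type) (P : protocol n V X M A).
Implicit Types (r : run_t n V X M A) (st : lstate n V X M A) (g : gstate n V X M A).

Lemma sent_to_recv st k msg q :
  sent_to (app_ev st (EvRecv X A k msg)) q = sent_to st q.
Proof. by rewrite /sent_to /app_ev /= -cats1 pmap_cat /= cats0. Qed.

Lemma recv_count_recv st k msg :
  recv_count (app_ev st (EvRecv X A k msg)) k = (recv_count st k).+1.
Proof. by rewrite /recv_count /app_ev /= -cats1 count_cat /= eqxx addn0 addn1. Qed.

Lemma local_stepE g i st :
  local_step P g i st -> st = g i \/ exists e, st = app_ev (g i) e.
Proof. by case=> *; [left | right; eexists ..]. Qed.

Lemma local_step_transfer g g' i st :
  local_step P g i st -> g' i = g i ->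
  (forall k msg, st = app_ev (g i) (EvRecv X A k msg) ->
     oldest_in_transit g k i msg -> oldest_in_transit g' k i msg) ->
  local_step P g' i st.
Proof.
move=> [|a Pa|x|k msg transit] Eg transit'; rewrite -Eg.
- exact: st_skip.
- by apply: st_move; rewrite Eg.
- exact: st_invoke.
- by apply/st_deliver/transit'; rewrite ?Eg.
Qed.

Variable r : run_t n V X M A.
Hypothesis r_run : is_run P r.

Lemma sent_to_prefix p q a b :
  a <= b -> exists v, sent_to (r b p) q = sent_to (r a p) q ++ v.
Proof.
have [_ r_step] := r_run.
elim: b => [|b IHb] le_ab.
  by exists [::]; rewrite cats0; have -> : a = 0 by lia.
case: (ltnP b a) => [lt_ba | /IHb [v IHv]].
  by exists [::]; rewrite cats0; have -> : a = b.+1 by lia.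
case: (local_stepE (r_step b p)) => [-> | [e ->]]; first by exists v.
by rewrite /sent_to /app_ev /= -cats1 pmap_cat -/(sent_to (r b p) q) IHv -catA; eexists.
Qed.

Lemma sent_to_sizeS x p q :
  size (sent_to (r x.+1 p) q) <= (size (sent_to (r x p) q)).+1.
Proof.
have [_ r_step] := r_run.
case: (local_stepE (r_step x p)) => [-> | [e ->]]; first exact: leqnSn.
rewrite /sent_to /app_ev /= -cats1 pmap_cat size_cat.
by case: e => [?|q' ?|??|?] /=; try case: (q' == q) => /=; lia.
Qed.

Lemma in_transit_sent k j m2 msg :
  oldest_in_transit (r m2) k j msg ->
  exists2 s, s < m2 &
    size (sent_to (r s k) j) <= recv_count (r m2 j) k < size (sent_to (r s.+1 k) j).
Proof.
case=> rest transit.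
have [r0 _] := r_run.
apply: (exists_crossing (g := fun x => size (sent_to (r x k) j))).
  by rewrite /sent_to r0.
by have := f_equal size transit; rewrite size_drop /=; lia.
Qed.

Lemma delivery_chain k j m2 s msg :
  r m2.+1 j = app_ev (r m2 j) (EvRecv X A k msg) ->
  size (sent_to (r s k) j) <= recv_count (r m2 j) k < size (sent_to (r s.+1 k) j) ->
  chain r (k, s) (j, m2.+1).
Proof.
move=> recv /andP[sent_before sent_after].
apply: ch_msg; first lia.
by rewrite recv recv_count_recv; have := sent_to_sizeS s k j; lia.
Qed.

(* FIFO: the oldest message on a channel is determined by the sender's
   history up to the round in which it was sent. *)
Lemma oldest_in_transit_transfer g k j m2 s x msg :
  oldest_in_transit (r m2) k j msg ->
  recv_count (r m2 j) k < size (sent_to (r s.+1 k) j) ->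
  s < m2 -> s < x -> g j = r m2 j -> g k = r x k ->
  oldest_in_transit g k j msg.
Proof.
move=> [rest transit] sent lt_sm2 lt_sx gj gk.
rewrite /oldest_in_transit gj gk.
set c := recv_count _ k in transit sent *.
have [v2 Ev2] := sent_to_prefix k j lt_sm2.
have [vx ->] := sent_to_prefix k j lt_sx.
rewrite Ev2 drop_cat ifT // (drop_nth msg sent) in transit.
rewrite drop_cat ifT // (drop_nth msg sent).
by move: transit => /= [-> _]; eexists.
Qed.

Lemma chain_from_silent_round j m c :
  chain r (j, m) c ->
  (forall q, size (sent_to (r m.+1 j) q) <= size (sent_to (r m j) q)) ->
  (j, m.+1) = c \/ chain r (j, m.+1) c.
Proof.
move: {-1}(j, m) (erefl (j, m)) => a Ea ch; elim: ch j m Ea => {a c}.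
- move=> p t t' lt_tt' j m [-> ->] _.
  case: (ltnP t.+1 t') => [? | ?]; first by right; apply: ch_local.
  by left; have -> : t' = t.+1 by lia.
- by move=> p q t t' sent _ j m [-> ->] /(_ q); lia.
- move=> a b c _ IHab bc _ j m Ea silent.
  by case: (IHab j m Ea silent) => [-> | ab]; right => //; apply: ch_trans ab bc.
Qed.

Lemma no_chain_from_later k T s c :
  ~ chain r (k, T) c -> T <= s -> ~ chain r (k, s) c.
Proof.
move=> no_chain le_Ts ch; apply: no_chain.
case: (ltnP T s) => [lt_Ts | le_sT]; first exact: ch_trans (ch_local r k lt_Ts) ch.
by have -> : T = s by lia.
Qed.

Lemma causal_past_sender (T : 'I_n -> nat) c j m k s msg :
  (forall k, ~ chain r (k, T k) c) -> chain r (j, m) c ->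
  r m.+1 j = app_ev (r m j) (EvRecv X A k msg) ->
  chain r (k, s) (j, m.+1) -> s < T k.
Proof.
move=> threshold jm_c recv ks_jm.
have silent q : size (sent_to (r m.+1 j) q) <= size (sent_to (r m j) q).
  by rewrite recv sent_to_recv.
have ks_c : chain r (k, s) c.
  by case: (chain_from_silent_round jm_c silent) => [<- | ]; last exact: ch_trans.
by rewrite ltnNge; apply/negP => /(no_chain_from_later (threshold k)); apply.
Qed.

Definition retime (F : 'I_n -> nat -> nat) : run_t n V X M A :=
  fun m k => r (F k m) k.

(* Sufficient for a delivery replayed in round [m+1] of the retimed run to
   find its message already sent. *)
Definition ready_to_receive (F : 'I_n -> nat -> nat) j m : Prop :=
  forall k s msg, s < F j m ->
    r (F j m).+1 j = app_ev (r (F j m) j) (EvRecv X A k msg) ->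
    chain r (k, s) (j, (F j m).+1) -> s < F k m.

Lemma retime_step F j m :
  F j m.+1 = (F j m).+1 -> ready_to_receive F j m ->
  local_step P (retime F m) j (retime F m.+1 j).
Proof.
move=> F_S ready; have [_ r_step] := r_run.
rewrite /retime F_S; set m2 := F j m.
apply: local_step_transfer (r_step m2 j) _ _ => // k msg recv transit.
have [s lt_sm2 sent_in] := in_transit_sent transit.
have lt_sF := ready k s msg lt_sm2 recv (delivery_chain recv sent_in).
have /andP[_ sent] := sent_in.
exact: oldest_in_transit_transfer transit sent lt_sm2 lt_sF _ _.
Qed.

Lemma retime_is_run F :
  (forall k, F k 0 = 0) ->
  (forall j m, F j m.+1 = F j m \/ F j m.+1 = (F j m).+1 /\ ready_to_receive F j m) ->
  is_run P (retime F).
Proof.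
have [r0 _] := r_run.
move=> F0 F_S; split=> [k | m j]; first by rewrite /retime F0; apply: r0.
case: (F_S j m) => [F_eq | [F_succ ready]]; last exact: retime_step.
by rewrite /retime F_eq; apply: st_skip.
Qed.

Lemma retime_loc_equiv F :
  (forall k x, exists m, F k m = x) -> loc_equiv r (retime F).
Proof.
move=> F_surj j s; split=> [[x <-] | [m <-]]; last by exists (F j m).
by have [m <-] := F_surj j x; exists m.
Qed.

End Runs.

Theorem theorem6 (n : nat) (V X M A : Type) (P : protocol n V X M A)
  (r : run_t n V X M A) (i : 'I_n) (t : nat) (Delta : nat) (tj : 'I_n -> nat) :
  is_run P r ->
  0 < Delta ->
  (* tj j is the minimal l >= 0 with <j,l> not ~>_r <i,t> *)
  (forall j : 'I_n, ~ chain r (j, tj j) (i, t) /\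
                     (forall l, l < tj j -> chain r (j, l) (i, t))) ->
  exists r' : run_t n V X M A,
    is_run P r' /\ loc_equiv r r' /\
    forall j : 'I_n,
      (forall m, m <= tj j -> r m j = r' m j) /\
      (forall m, tj j + 1 <= m -> r m j = r' (m + Delta) j).
Proof.
move=> r_run Delta_gt0 tj_min.
pose F k := delay_time (tj k) Delta.
exists (retime r F); split; [|split].
- apply: retime_is_run => // j m.
  case: (ltnP m (tj j)) => [lt_m_tj | le_tj_m].
    right; rewrite /ready_to_receive /F !delay_time_le ?(ltnW lt_m_tj) //.
    split=> // k s msg lt_sm recv ks_jm.
    have := causal_past_sender (fun k => (tj_min k).1) ((tj_min j).2 m lt_m_tj)
      recv ks_jm.
    by have := delay_time_ge_min (tj k) Delta m; lia.
  case: (delay_timeS Delta_gt0 le_tj_m) => [F_eq | [F_succ F_m]]; [left | right].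
    exact: F_eq.
  split=> // k s msg; rewrite /F F_m => lt_sF _ _.
  by have := delay_time_ge_sub (tj k) Delta m; lia.
- by apply: retime_loc_equiv => k; apply: delay_time_surj.
- move=> j; split=> m le_m.
    by rewrite /retime /F delay_time_le.
  by rewrite /retime /F delay_time_addD //; lia.
Qed.
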